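(* Fix $s,b\ge1$, let $\{a_i\}$ be the $(s,b)$-Generacci sequence, and let $p_{n,k}$ denote the number of integers in $[0,a_{nb+1})$ whose $(s,b)$-Generacci legal decomposition contains exactly $k$ summands. Then for all $k\ge1$ and $n\ge1+(k-1)(s+1)$, \[p_{n,k}=b^k\binom{n-s(k-1)}{k}.\]
   Context: Fix integers $s,b\ge1$. For an increasing sequence of positive integers $\{a_i\}_{i\ge1}$ define bins $\mathcal{B}_n=\{a_{b(n-1)+1},\dots,a_{bn}\}$ for $n\ge1$, $\mathcal{B}_j=\emptyset$ for $j\le 0$. A decomposition $m=a_{\ell_1}+\dots+a_{\ell_k}$ with $a_{\ell_1}>\dots>a_{\ell_k}$ is an $(s,b)$-Generacci legal decomposition if $\{a_{\ell_i},a_{\ell_{i+1}}\}\not\subset\mathcal{B}_{j-s}\cup\dots\cup\mathcal{B}_j$ for all $i,j$. The $(s,b)$-Generacci sequence is the increasing sequence in which each $a_i$ is the smallest positive integer with no legal decomposition using $a_1,\dots,a_{i-1}$; every nonnegative integer has a unique legal decomposition. *)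

From mathcomp Require Import all_boot.
From mathcomp Require Import boolp.
Set Implicit Arguments. Unset Strict Implicit. Unset Printing Implicit Defensive.

(* Sequences are a : nat -> nat, indexed from 1 (a 0 is unused).
   Index l >= 1 lies in bin B_{bin b l}, since
   B_n = {a_{b(n-1)+1}, ..., a_{bn}}. *)
Definition bin (b l : nat) : nat := (l.-1 %/ b).+1.

(* Two consecutive summands a_x > a_y (x > y indices) of a decomposition are
   allowed iff they do not both lie in some window B_{j-s} u ... u B_j.
   Since bins with index <= 0 are empty and every index has bin >= 1, such a
   window exists iff bin y + s >= bin x; so the step is legal iff
   bin y + s < bin x. *)
Definition legal_step (s b : nat) (x y : nat) : bool :=
  (y < x) && (bin b y + s < bin b x).

Definition is_legal_decomp (s b : nat) (a : nat -> nat) (m : nat) (l : seq nat) : Prop :=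
  all (fun i => 0 < i) l /\ sorted (legal_step s b) l /\ \sum_(i <- l) a i = m.

Definition representable_below (s b : nat) (a : nat -> nat) (i m : nat) : Prop :=
  exists l, is_legal_decomp s b a m l /\ all (fun j => j < i) l.

Definition is_generacci (s b : nat) (a : nat -> nat) : Prop :=
  (forall i, 0 < i -> a i < a i.+1) /\
  forall i, 0 < i ->
    [/\ 0 < a i,
        ~ representable_below s b a i (a i) &
        forall m, 0 < m -> m < a i -> representable_below s b a i m].

Definition p_count (s b : nat) (a : nat -> nat) (n k : nat) : nat :=
  #|[set m : 'I_(a (n * b).+1) |
      `[< exists l, is_legal_decomp s b a m l /\ size l = k >] ]|.

From mathcomp Require Import all_boot.
From mathcomp Require Import boolp zify.
Set Implicit Arguments. Unset Strict Implicit. Unset Printing Implicit Defensive.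

(* A legal step x > y is exactly y <= legal_max x, the last index of the bin
   s + 1 bins below that of x.  The minimality in the definition of the
   Generacci sequence gives a_x + a_{legal_max x + 1} <= a_{x+1}, hence every
   legal decomposition with largest index x sums to a value in [a_x, a_{x+1}),
   so legal decompositions are unique and those of the integers below
   a_{nb+1} are exactly the legal index lists with entries at most nb.
   Counting these lists by their largest index: each of the b indices of
   bin n+1 can be followed by any legal list with entries at most (n-s)b,
   which gives the recursion
   p_{n+1,k+1} = p_{n,k+1} + b p_{n-s,k} solved by b^k C(n-s(k-1), k). *)

(* It is 0, so that nothing may follow x, when bin x <= s. *)
Definition legal_max (s b x : nat) : nat := b * (bin b x - s - 1).

Lemma legal_stepE s b x y :
  0 < b -> 0 < y -> legal_step s b x y = (y <= legal_max s b x).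
Proof.
move=> b_gt0 y_gt0; rewrite /legal_step /legal_max /bin.
set qx := x.-1 %/ b; set qy := y.-1 %/ b.
have -> : qx.+1 - s - 1 = qx - s by lia.
have -> : (qy.+1 + s < qx.+1) = (qy < qx - s) by apply/idP/idP; lia.
rewrite /qy ltn_divLR // [b * _]mulnC.
have qxb : qx * b <= x.-1 by rewrite leq_divM.
have qsb : (qx - s) * b <= qx * b by rewrite leq_mul2r leq_subr orbT.
by apply/idP/idP => [/andP[] | ?]; [lia | apply/andP; lia].
Qed.

Lemma legal_max_lt s b x : 0 < x -> legal_max s b x < x.
Proof.
move=> x_gt0; rewrite /legal_max /bin.
have qb : x.-1 %/ b * b <= x.-1 by rewrite leq_divM.
set q := x.-1 %/ b in qb *.
have : b * (q.+1 - s - 1) <= q * b by rewrite mulnC leq_mul2r; apply/orP; right; lia.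
lia.
Qed.

Lemma legal_step_trans s b : transitive (legal_step s b).
Proof. by move=> y x z /andP[? ?] /andP[? ?]; apply/andP; split; lia. Qed.

Definition legal_seq (s b : nat) (l : seq nat) : bool :=
  all (fun i => 0 < i) l && sorted (legal_step s b) l.

Lemma legal_seq_cons s b x l : 0 < b ->
  legal_seq s b (x :: l) =
    [&& 0 < x, legal_seq s b l & all (fun y => y <= legal_max s b x) l].
Proof.
move=> b_gt0; rewrite /legal_seq /= (path_sortedE (@legal_step_trans s b)).
case l_gt0: (all (fun i => 0 < i) l); last by rewrite !andbF.
rewrite (@eq_in_all _ _ (fun y => y <= legal_max s b x)); last first.
  by move=> y yl; rewrite legal_stepE // (allP l_gt0).
by case: (0 < x); case: (sorted _ _); case: (all _ _).
Qed.

Lemma legal_seq_cons_lt s b x l : 0 < b ->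
  legal_seq s b (x :: l) -> all (fun y => y < x) l.
Proof.
move=> b_gt0; rewrite legal_seq_cons // => /and3P[x_gt0 _ /allP l_le].
by apply/allP=> y /l_le; have := legal_max_lt s b x_gt0; lia.
Qed.

Fixpoint legal_lists (s b k : nat) : nat -> seq (seq nat) :=
  if k is k'.+1 then
    fix legal_lists_k M :=
      if M is M'.+1 then
        legal_lists_k M' ++ map (cons M) (legal_lists s b k' (legal_max s b M))
      else [::]
  else fun=> [:: [::]].

Lemma legal_listsS s b k M : legal_lists s b k.+1 M.+1 =
  legal_lists s b k.+1 M ++ map (cons M.+1) (legal_lists s b k (legal_max s b M.+1)).
Proof. by []. Qed.

Lemma mem_map_cons (T : eqType) (x y : T) l (S : seq (seq T)) :
  (x :: l \in map (cons y) S) = (x == y) && (l \in S).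
Proof.
by apply/mapP/andP => [[l' l'S [-> ->]] | [/eqP-> lS]]; [split | exists l].
Qed.

Lemma mem_legal_lists s b k M l : 0 < b ->
  (l \in legal_lists s b k M) =
    [&& legal_seq s b l, all (fun i => i <= M) l & size l == k].
Proof.
move=> b_gt0; elim: k M l => [|k IHk] M l.
  by rewrite inE; case: l => //= x l; rewrite !andbF.
elim: M l => [|M IHM] [|x l] //=.
- by rewrite legal_seq_cons //; case: x => [|x] /=; rewrite ?andbF.
- by rewrite mem_cat IHM; apply/mapP => -[].
rewrite mem_cat IHM mem_map_cons IHk /= eqSS.
have [xM | Mx | ->] := ltngtP x M.+1.
- rewrite orbF -ltnS xM /=; case xl_legal: (legal_seq s b (x :: l)) => //=.
  congr (_ && _); apply: eq_in_all => y /(allP (legal_seq_cons_lt b_gt0 xl_legal)) /= yx.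
  by apply/idP/idP; lia.
- by rewrite orbF (_ : x <= M = false) ?andbF //; lia.
rewrite ltnn legal_seq_cons //=; case: (legal_seq s b l) => //=.
case l_le: (all _ l) => //=; rewrite (sub_all _ l_le) // => y /= y_le.
by have := legal_max_lt s b (ltn0Sn M); lia.
Qed.

Lemma uniq_legal_lists s b k M : 0 < b -> uniq (legal_lists s b k M).
Proof.
move=> b_gt0; elim: k M => [|k IHk] // M; elim: M => [|M IHM] //.
rewrite legal_listsS cat_uniq IHM map_inj_uniq ?IHk ?andbT; last by move=> ? ? [].
apply/hasPn => _ /mapP[l _ ->].
by rewrite mem_legal_lists //= ltnn andbF.
Qed.

Definition legal_count (s b k n : nat) : nat := b ^ k * 'C(n - s * (k - 1), k).

Lemma legal_countS s b k n :
  legal_count s b k.+1 n.+1 = legal_count s b k.+1 n + b * legal_count s b k (n - s).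
Proof.
have shift : 'C(n - s - s * (k - 1), k) = 'C(n - s * k, k).
  by case: k => [|k]; rewrite ?bin0 // subn1 -subnDA mulnS.
have pascal : 'C(n.+1 - s * k, k.+1) = 'C(n - s * k, k.+1) + 'C(n - s * k, k).
  have [sk_le | n_lt] := leqP (s * k) n; first by rewrite subSn // binS.
  have -> : n.+1 - s * k = 0 by lia.
  have -> : n - s * k = 0 by lia.
  by case: k n_lt {shift} => [|k]; rewrite ?muln0 // !bin0n.
by rewrite /legal_count subn1 /= shift pascal expnS mulnDr !mulnA.
Qed.

Lemma legal_max_bin s b n r : r < b -> legal_max s b (n * b + r).+1 = (n - s) * b.
Proof.
move=> r_lt; have b_gt0 : 0 < b by apply: leq_ltn_trans r_lt.
rewrite /legal_max /bin /= divnMDl // divn_small // addn0 mulnC.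
by congr (_ * _); lia.
Qed.

Lemma size_legal_lists s b k n : 0 < b ->
  size (legal_lists s b k (n * b)) = legal_count s b k n.
Proof.
move=> b_gt0; elim: k n => [|k IHk] n; first by rewrite /legal_count expn0 mul1n bin0.
elim: n => [|n IHn]; first by rewrite mul0n /legal_count sub0n bin0n muln0.
have bin_prefix r : r <= b ->
    size (legal_lists s b k.+1 (n * b + r)) =
      legal_count s b k.+1 n + r * legal_count s b k (n - s).
  elim: r => [|r IHr] r_le; first by rewrite addn0 IHn mul0n addn0.
  rewrite addnS legal_listsS size_cat IHr ?(ltnW r_le) // size_map legal_max_bin //.
  by rewrite IHk mulSnr addnA.
by rewrite mulSn addnC bin_prefix // legal_countS mulnC.
Qed.

Lemma card_ord_mem A (S : seq nat) : uniq S -> all (fun x => x < A) S ->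
  #|[set m : 'I_A | val m \in S]| = size S.
Proof.
move=> S_uniq S_lt; rewrite -sum1_card.
rewrite (eq_bigl (fun i : 'I_A => val i \in S)) => [|i]; last by rewrite inE.
rewrite -(big_mkord (mem S) (fun=> 1)) sum1_count -size_filter.
apply/perm_size/uniq_perm; rewrite ?filter_uniq ?iota_uniq // => x.
rewrite mem_filter mem_index_iota /=.
by case x_in: (x \in S); rewrite // (allP S_lt).
Qed.

Section GeneracciDecomposition.

Variables (s b : nat) (a : nat -> nat).
Hypotheses (b_gt0 : 0 < b) (gen_a : is_generacci s b a).

Local Notation sumA l := (\sum_(i <- l) a i).

Lemma generacci_lt i j : 0 < i -> i < j -> a i < a j.
Proof.
case: i j => [|i] [|j] // _; rewrite ltnS.
apply: (homo_ltn (f := fun i => a i.+1) ltn_trans) => k.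
exact: gen_a.1.
Qed.

Lemma generacci_le i j : 0 < i -> i <= j -> a i <= a j.
Proof.
move=> i_gt0; rewrite leq_eqVlt => /predU1P[-> // | ij].
exact: ltnW (generacci_lt i_gt0 ij).
Qed.

Lemma generacci_gt0 i : 0 < i -> 0 < a i.
Proof. by move=> i_gt0; case: (gen_a.2 i i_gt0). Qed.

Lemma legal_decompP m l :
  is_legal_decomp s b a m l <-> legal_seq s b l /\ sumA l = m.
Proof. by rewrite /legal_seq; split=> [[-> [-> ->]] | [/andP[? ?] ?]]. Qed.

Lemma generacci_gap x : 0 < x -> a x + a (legal_max s b x).+1 <= a x.+1.
Proof.
(* Otherwise a_{x+1} - a_x is decomposable with indices at most
   legal_max x, and prepending x decomposes a_{x+1} below x+1. *)
move=> x_gt0; rewrite leqNgt; apply/negP => gap_lt.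
have ax_lt := generacci_lt x_gt0 (ltnSn x).
set d := a x.+1 - a x.
have d_gt0 : 0 < d by rewrite subn_gt0.
have d_lt : d < a (legal_max s b x).+1 by lia.
have [_ _ /(_ d d_gt0 d_lt) [l [/legal_decompP[l_legal l_sum] l_lt]]] :=
  gen_a.2 _ (ltn0Sn (legal_max s b x)).
have [_ not_repr _] := gen_a.2 _ (ltn0Sn x); apply: not_repr.
exists (x :: l); split; last first.
  rewrite /= ltnSn; apply/allP => y /(allP l_lt).
  by have := legal_max_lt s b x_gt0; lia.
apply/legal_decompP; split; last by rewrite big_cons l_sum /d; lia.
by rewrite legal_seq_cons // x_gt0 l_legal; apply/allP => y /(allP l_lt).
Qed.

Lemma generacci_sum_lt l i : legal_seq s b l -> 0 < i ->
  all (fun y => y < i) l -> sumA l < a i.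
Proof.
elim: l i => [|x l IHl] i; first by rewrite big_nil => _ /generacci_gt0.
rewrite legal_seq_cons // => /and3P[x_gt0 l_legal l_le] i_gt0 /andP[xi _].
have l_sum : sumA l < a (legal_max s b x).+1.
  by apply: IHl => //; apply/allP => y /(allP l_le).
have := generacci_gap x_gt0; have := generacci_le (ltn0Sn x) xi.
by rewrite big_cons; lia.
Qed.

Lemma generacci_sum_cons_bounds x l : legal_seq s b (x :: l) ->
  a x <= sumA (x :: l) < a x.+1.
Proof.
move=> xl_legal; apply/andP; split; first by rewrite big_cons leq_addr.
apply: generacci_sum_lt => //=; rewrite ltnSn /=.
by apply/allP => y /(allP (legal_seq_cons_lt b_gt0 xl_legal)) /ltnW.
Qed.

Lemma generacci_decomp_inj l1 l2 : legal_seq s b l1 -> legal_seq s b l2 ->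
  sumA l1 = sumA l2 -> l1 = l2.
Proof.
elim: l1 l2 => [|x l1 IHl] [|y l2] //.
- move=> _ /[dup] /generacci_sum_cons_bounds + /andP[/andP[y_gt0 _] _].
  by rewrite big_nil; have := generacci_gt0 y_gt0; lia.
- move=> /[dup] /generacci_sum_cons_bounds + /andP[/andP[x_gt0 _] _] _.
  by rewrite big_nil; have := generacci_gt0 x_gt0; lia.
move=> xl_legal yl_legal sum_eq.
have := generacci_sum_cons_bounds xl_legal.
have := generacci_sum_cons_bounds yl_legal.
have [xy | yx | eq_xy] := ltngtP x y.
- by have := generacci_le (ltn0Sn x) xy; lia.
- by have := generacci_le (ltn0Sn y) yx; lia.
move=> _ _; subst y; congr cons; apply: IHl.
- by move: xl_legal; rewrite legal_seq_cons // => /and3P[].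
- by move: yl_legal; rewrite legal_seq_cons // => /and3P[].
by move: sum_eq; rewrite !big_cons => /addnI.
Qed.

Lemma generacci_decomp_exists N m : m < a N.+1 ->
  exists2 l, legal_seq s b l & all (fun y => y <= N) l /\ sumA l = m.
Proof.
move=> m_lt; have [-> | m_gt0] := posnP m; first by exists [::]; rewrite ?big_nil.
have [_ _ /(_ m m_gt0 m_lt) [l [/legal_decompP[l_legal l_sum] l_lt]]] :=
  gen_a.2 _ (ltn0Sn N).
by exists l.
Qed.

Lemma legal_decomp_size_mem N m k : m < a N.+1 ->
  (exists l, is_legal_decomp s b a m l /\ size l = k) <->
  m \in map (fun l => sumA l) (legal_lists s b k N).
Proof.
move=> m_lt; split.
- move=> [l [/legal_decompP[l_legal l_sum] l_size]].
  have [l' l'_legal [l'_le l'_sum]] := generacci_decomp_exists m_lt.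
  have l'_eq : l' = l by apply: generacci_decomp_inj; rewrite // l_sum.
  subst l'; apply/mapP; exists l => //.
  by rewrite mem_legal_lists // l_legal l'_le l_size /=.
- move=> /mapP[l]; rewrite mem_legal_lists // => /and3P[l_legal _ /eqP l_size] m_eq.
  by exists l; split => //; apply/legal_decompP.
Qed.

Lemma p_count_legal_count n k : p_count s b a n k = legal_count s b k n.
Proof.
set sums := map (fun l => sumA l) (legal_lists s b k (n * b)).
have sums_uniq : uniq sums.
  rewrite map_inj_in_uniq ?uniq_legal_lists // => l1 l2.
  rewrite !mem_legal_lists // => /and3P[l1_legal _ _] /and3P[l2_legal _ _].
  exact: generacci_decomp_inj.
have sums_lt : all (fun m => m < a (n * b).+1) sums.
  apply/allP => _ /mapP[l + ->]; rewrite mem_legal_lists // => /and3P[l_legal l_le _].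
  by apply: generacci_sum_lt => //; apply/allP => y /(allP l_le).
rewrite -size_legal_lists // -(size_map (fun l => sumA l)).
rewrite -(card_ord_mem sums_uniq sums_lt).
apply: eq_card => m; rewrite !inE.
by apply/asboolP/idP => /(legal_decomp_size_mem k (ltn_ord m)).
Qed.

End GeneracciDecomposition.

Theorem propositionC1 (s b : nat) (a : nat -> nat) :
  0 < s -> 0 < b -> is_generacci s b a ->
  forall k n : nat, 1 <= k -> 1 + (k - 1) * (s + 1) <= n ->
  p_count s b a n k = b ^ k * 'C(n - s * (k - 1), k).
Proof.
by move=> _ b_gt0 gen_a k n _ _; apply: p_count_legal_count.
Qed.
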